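(* Let $p$ be a prime and $f,g\in\mathbb{Z}[x]$ monic with nonzero resultant $r$. Then $$v_p(r)\ \ge\ \int_0^\infty\sum_{m=1}^{p^{\lceil t\rceil}}\chi_t^{(f)}(m)\,\chi_t^{(g)}(m)\,dt.$$
   Context: $v_p$ is the $p$-adic valuation, extended to an algebraic closure $\overline{\mathbb{Q}_p}$. For a monic $h\in\overline{\mathbb{Q}_p}[x]$ with factorization $h=\prod_i(x-\delta_i)$ (roots with multiplicity), $m\in\mathbb{Z}_p$ and real $t\ge0$, define $\chi_t^{(h)}(m)=\#\{i: v_p(m-\delta_i)\ge t\}$. The resultant of monic $f=\prod_i(x-\alpha_i)$, $g=\prod_j(x-\beta_j)$ is $r=\prod_{i,j}(\alpha_i-\beta_j)$. *)

From HB Require Import structures.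
From mathcomp Require Import all_boot all_order all_algebra all_field.
From mathcomp Require Import all_classical all_reals all_analysis.
Set Implicit Arguments. Unset Strict Implicit. Unset Printing Implicit Defensive.
Import Order.TTheory GRing.Theory Num.Theory.
Local Open Scope ring_scope.
Local Open Scope ereal_scope.

(* A valuation v : algC -> \bar R on the algebraic numbers algC (= an
   algebraic closure of Q) extending the p-adic valuation v_p of Q.
   Every root of a polynomial in Z[x] lies in algC, and (restricted to the
   algebraic numbers) the p-adic valuation extended to an algebraic closure
   of Q_p is exactly such a valuation (all of them are Galois conjugate). *)
Definition padic_valuation (R : realType) (p : nat) (v : algC -> \bar R) : Prop :=
  [/\ forall x : algC, v x = +oo <-> x = 0%R,
      forall x y : algC, v (x * y)%R = v x + v y,
      forall x y : algC, Order.min (v x) (v y) <= v (x + y)%R &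
      forall z : int, z != 0%R -> v (z%:~R) = ((logn p `|z|%N)%:R)%:E].

(* chi_t^{(h)}(m) where the roots of h (with multiplicity) are the list rs *)
Definition chi (R : realType) (v : algC -> \bar R) (rs : seq algC) (t : R) (m : nat) : nat :=
  count (fun d : algC => (t%:E <= v (m%:R - d)%R)) rs.

Definition res_roots (rf rg : seq algC) : algC :=
  (\prod_(a <- rf) \prod_(b <- rg) (a - b))%R.

Definition integrand (R : realType) (p : nat) (v : algC -> \bar R)
  (rf rg : seq algC) (t : R) : R :=
  ((\sum_(1 <= m < (p ^ `|Num.ceil t|%N).+1) chi v rf t m * chi v rg t m)%N)%:R.

From HB Require Import structures.
From mathcomp Require Import all_boot all_order all_algebra all_field.
From mathcomp Require Import all_classical all_reals all_analysis.
From mathcomp Require Import measurable_realfun ring zify.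
Set Implicit Arguments.
Unset Strict Implicit.
Unset Printing Implicit Defensive.

Import Order.TTheory GRing.Theory Num.Theory.
Local Open Scope ring_scope.

(* By the ultrametric inequality, an
   integer m with v(m - a) >= t and v(m - b) >= t forces v(a - b) >= t, and at
   most one m in [1, p^ceil t] satisfies v(m - a) >= t, since two of them would
   differ by a positive integer below p^ceil t yet divisible by p^ceil t.  So
   the integrand at t is at most the number of pairs with v(a - b) >= t.  The
   roots of monic integer polynomials have nonnegative valuation, hence so do
   the differences a - b, and the integral over t >= 0 of the indicator of
   t <= v(a - b) is v(a - b); summing over the pairs gives v(r). *)

Lemma count_le1 (T : eqType) (s : seq T) (P : pred T) :
  uniq s -> {in s &, forall x y, P x -> P y -> x = y} -> (count P s <= 1)%N.
Proof.
move=> s_uniq P_uniq; have [/hasP[x xs Px]|] := boolP (has P s); last first.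
  by rewrite has_count -leqNgt => /leq_trans->.
rewrite -size_filter (@uniq_leq_size _ _ [:: x]) ?filter_uniq // => y.
by rewrite mem_filter inE => /andP[Py ys]; apply/eqP; exact: P_uniq.
Qed.

Lemma count_sum_nat (T : Type) (P : pred T) (s : seq T) :
  count P s = (\sum_(x <- s) P x)%N.
Proof. by rewrite -sumn_count sumnE big_map. Qed.

Section EFin_le_integral.
Local Open Scope classical_set_scope.
Local Open Scope ereal_scope.

Lemma nonmeasurable_ge0_le_integral d (T : measurableType d) (R : realType)
    (mu : {measure set T -> \bar R}) (D : set T) (f g : T -> \bar R) :
  (forall x, D x -> 0 <= f x) -> (forall x, D x -> f x <= g x) ->
  \int[mu]_(x in D) f x <= \int[mu]_(x in D) g x.
Proof.
move=> f_ge0 fg; have g_ge0 x : D x -> 0 <= g x.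
  by move=> Dx; exact: le_trans (f_ge0 _ Dx) (fg _ Dx).
rewrite ge0_integralE // [leRHS]ge0_integralE //=.
apply: ereal_sup_le => _ [h hf <-]; exists h => //= x.
apply: le_trans (hf x) _; rewrite /patch; case: ifP => // /set_mem Dx; exact: fg.
Qed.

Variable R : realType.

Lemma indic_EFin_le (x : \bar R) (t : R) :
  (((t%:E <= x)%E : nat)%:R : R) = \1_[set u : R | u%:E <= x] t.
Proof.
rewrite indicE; have [tx|tx] := boolP (t%:E <= x); first by rewrite mem_set.
by rewrite memNset //=; exact/negP.
Qed.

Lemma measurable_EFin_le (x : \bar R) : measurable [set t : R | t%:E <= x].
Proof.
case: x => [r| |].
- have -> : [set t : R | t%:E <= r%:E] = `]-oo, r].
    by apply/seteqP; split=> t /=; rewrite in_itv /= lee_fin.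
  exact: measurable_itv.
- have -> : [set t : R | t%:E <= +oo] = setT.
    by apply/seteqP; split=> t //=; rewrite leey.
  exact: measurableT.
- have -> : [set t : R | t%:E <= -oo] = set0.
    by apply/seteqP; split=> t //=; rewrite leeNy_eq.
  exact: measurable0.
Qed.

Lemma measurable_fun_EFin_le (D : set R) (x : \bar R) :
  measurable_fun D (fun t => (((t%:E <= x)%E : nat)%:R : R)%:E).
Proof.
apply/measurable_EFinP; rewrite (_ : (fun t => _) = \1_[set u | u%:E <= x]).
  exact: measurable_indic (measurable_EFin_le x).
by apply/funext => t; exact: indic_EFin_le.
Qed.

Lemma integral_EFin_le (x : \bar R) : 0 <= x ->
  \int[lebesgue_measure]_(t in `[0%R, +oo[) (((t%:E <= x)%E : nat)%:R : R)%:E = x.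
Proof.
move=> x_ge0; under eq_integral do rewrite indic_EFin_le.
rewrite integral_indic//; last exact: measurable_EFin_le.
case: x x_ge0 => [r| |] // r_ge0.
- have -> : [set t : R | t%:E <= r%:E] `&` `[0%R, +oo[ = `[0%R, r].
    apply/seteqP; split=> t /=; rewrite !in_itv /= andbT lee_fin.
      by case=> -> ->.
    by case/andP=> -> ->.
  etransitivity; first exact: (lebesgue_measure_itv `[0%R, r]%R).
  rewrite /= lte_fin oppr0 adde0; case: ltP => // r_le0.
  by have -> : r = 0%R by apply/le_anti; rewrite r_le0 -lee_fin.
have -> : [set t : R | t%:E <= +oo] `&` `[0%R, +oo[ = `[0%R, +oo[.
  by apply/seteqP; split=> t /=; [case|split=> //; rewrite leey].
etransitivity; first exact: (lebesgue_measure_itv `[0%R, +oo[%R).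
by rewrite /= ltry.
Qed.

End EFin_le_integral.

Section PadicValuation.
Variables (R : realType) (p : nat) (v : algC -> \bar R).
Hypothesis vP : padic_valuation p v.

Lemma valuation0 : v 0 = +oo%E.
Proof. by case: vP => v_eqy _ _ _; exact/v_eqy. Qed.

Lemma valuationM x y : v (x * y) = (v x + v y)%E.
Proof. by case: vP => _ vM _ _; exact: vM. Qed.

Lemma valuation_int (z : int) : z != 0 -> v z%:~R = (logn p `|z|%N)%:R%:E.
Proof. by case: vP => _ _ _ vz; exact: vz. Qed.

Lemma valuation_nat n : (0 < n)%N -> v n%:R = (logn p n)%:R%:E.
Proof. by move=> n_gt0; rewrite pmulrn valuation_int // -lt0n. Qed.

Lemma valuation_int_ge0 (z : int) : (0 <= v z%:~R)%E.
Proof.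
have [->|z0] := eqVneq z 0; first by rewrite mulr0z valuation0 leey.
by rewrite valuation_int // lee_fin ler0n.
Qed.

Lemma valuation1 : v 1 = 0%E.
Proof. by rewrite -[1]/(1%:R) valuation_nat // logn1. Qed.

Lemma valuationN x : v (- x) = v x.
Proof.
have vN1 : v (-1) = 0%E by rewrite -[-1]/((-1 : int)%:~R) valuation_int // logn1.
by rewrite -mulN1r valuationM vN1 add0e.
Qed.

Lemma valuation_prod (I : Type) (s : seq I) (F : I -> algC) :
  v (\prod_(i <- s) F i) = (\sum_(i <- s) v (F i))%E.
Proof.
elim: s => [|i s IHs]; first by rewrite !big_nil valuation1.
by rewrite !big_cons valuationM IHs.
Qed.

Lemma valuationD_ge c x y : (c <= v x)%E -> (c <= v y)%E -> (c <= v (x + y)%R)%E.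
Proof.
case: vP => _ _ vD _ cx cy.
by apply: le_trans (vD x y); rewrite le_min cx cy.
Qed.

Lemma valuationB_ge c x y : (c <= v x)%E -> (c <= v y)%E -> (c <= v (x - y)%R)%E.
Proof. by move=> cx cy; apply: valuationD_ge; rewrite ?valuationN. Qed.

Lemma valuation_sum_ge (I : Type) (s : seq I) (F : I -> algC) c :
  (forall i, c <= v (F i))%E -> (c <= v (\sum_(i <- s) F i)%R)%E.
Proof.
move=> cF; elim: s => [|i s IHs]; first by rewrite big_nil valuation0 leey.
by rewrite big_cons valuationD_ge.
Qed.

Lemma valuationX_ge x n : (0 <= v x)%E -> (0 < n)%N -> (v x <= v (x ^+ n)%R)%E.
Proof.
move=> vx_ge0; case: n => // n _; rewrite exprS valuationM leeDl //.
by elim: n => [|n IHn]; rewrite ?expr0 ?valuation1 // exprS valuationM adde_ge0.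
Qed.

(* Dividing the monic equation a^n + ... = 0 by a^n writes 1 as an integral
   combination of positive powers of a^-1, whose valuation would be > 0. *)
Lemma root_monic_valuation_ge0 (q : {poly int}) (a : algC) :
  q \is monic -> root (map_poly intr q) a -> (0 <= v a)%E.
Proof.
move=> q_monic qa; rewrite leNgt; apply/negP => va_lt0.
have a0 : a != 0 by apply: contraTneq va_lt0 => ->; rewrite valuation0.
set b := a^-1; have ab1 : a * b = 1 by rewrite divff.
have vb_gt0 : (0 < v b)%E.
  rewrite ltNge; apply/negP => vb_le0.
  have := valuationM a b; rewrite ab1 valuation1 => v0.
  have := leeD (lexx (v a)) vb_le0; rewrite -v0 adde0.
  by rewrite leNgt va_lt0.
set n := (size q).-1.
have size_q : size (map_poly intr q : {poly algC}) = n.+1.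
  rewrite size_map_inj_poly ?mulr0z //; last exact: intr_inj.
  by rewrite prednK // size_poly_gt0 monic_neq0.
have lead_q : (map_poly intr q)`_n = 1 :> algC.
  by rewrite coef_map_id0 ?mulr0z // -lead_coefE (monicP q_monic).
have one_eq : \sum_(i < n) (q`_i)%:~R * b ^+ (n - i) + 1 = 0.
  transitivity ((map_poly intr q).[a] * b ^+ n); last by rewrite (rootP qa) mul0r.
  rewrite horner_coef size_q big_ord_recr /= lead_q mul1r mulrDl -exprMn ab1 expr1n.
  rewrite mulr_suml; congr (_ + 1); apply: eq_bigr => i _.
  rewrite coef_map_id0 ?mulr0z // -mulrA; congr (_ * _).
  have -> : b ^+ n = b ^+ i * b ^+ (n - i) by rewrite -exprD subnKC // ltnW.
  by rewrite mulrA -exprMn ab1 expr1n mul1r.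
have : (v b <= v 1%R)%E.
  move/eqP: one_eq; rewrite addrC addr_eq0 => /eqP ->.
  rewrite valuationN; apply: valuation_sum_ge => i.
  rewrite valuationM -[v b]add0e leeD ?valuation_int_ge0 // valuationX_ge ?ltW //.
  by rewrite subn_gt0.
by rewrite valuation1 leNgt vb_gt0.
Qed.

Lemma roots_monic_valuation_ge0 (q : {poly int}) (rs : seq algC) :
  q \is monic -> map_poly intr q = \prod_(c <- rs) ('X - c%:P) ->
  {in rs, forall c, (0 <= v c)%E}.
Proof.
move=> q_monic q_rs c c_rs; apply: (root_monic_valuation_ge0 q_monic).
by rewrite q_rs root_prod_XsubC.
Qed.

Lemma valuation_res_roots (rf rg : seq algC) :
  v (res_roots rf rg) = (\sum_(ab <- [seq (a, b) | a <- rf, b <- rg]) v (ab.1 - ab.2)%R)%E.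
Proof.
rewrite big_allpairs /res_roots valuation_prod.
by apply: eq_bigr => a _; rewrite valuation_prod.
Qed.

Hypothesis p_prime : prime p.

Lemma valuation_nat_lt (t : R) n :
  0 <= t -> (0 < n < p ^ `|Num.ceil t|)%N -> (v n%:R < t%:E)%E.
Proof.
move=> t_ge0 /andP[n_gt0 n_lt]; rewrite valuation_nat // lte_fin ltNge pmulrn.
apply/negP; rewrite -ceil_le_int => ceil_le.
have ceil_ge0 : (0 <= Num.ceil t)%R by rewrite ceil_ge0 (lt_le_trans (ltrN10 R)).
have : (p ^ `|Num.ceil t| %| n)%N by rewrite pfactor_dvdn // -lez_nat gez0_abs.
by move/(dvdn_leq n_gt0); rewrite leqNgt n_lt.
Qed.

Lemma close_nat_uniq (a : algC) (t : R) : 0 <= t ->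
  {in index_iota 1 (p ^ `|Num.ceil t|).+1 &, forall m1 m2 : nat,
    (t%:E <= v (m1%:R - a)%R)%E -> (t%:E <= v (m2%:R - a)%R)%E -> m1 = m2}.
Proof.
move=> t_ge0; suff lt_close (m1 m2 : nat) : (1 <= m1)%N -> (m1 < m2)%N ->
    (m2 <= p ^ `|Num.ceil t|)%N ->
    (t%:E <= v (m1%:R - a)%R)%E -> (t%:E <= v (m2%:R - a)%R)%E -> False.
  move=> m1 m2; rewrite !mem_index_iota !ltnS => /andP[m1_ge1 m1_le] /andP[m2_ge1 m2_le].
  case: (ltngtP m1 m2) => [m12|m21|//] close1 close2; exfalso.
    exact: (lt_close m1 m2).
  exact: (lt_close m2 m1).
move=> m1_ge1 m12 m2_le close1 close2.
have : (t%:E <= v (m2 - m1)%:R%R)%E.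
  have -> : (m2 - m1)%:R = (m2%:R - a) - (m1%:R - a) :> algC.
    by rewrite natrB ?(ltnW m12) // opprB addrA subrK.
  exact: valuationB_ge close2 close1.
by rewrite leNgt valuation_nat_lt //; apply/andP; split; lia.
Qed.

Lemma sum_close_pair_le (a b : algC) (t : R) : 0 <= t ->
  (\sum_(1 <= m < (p ^ `|Num.ceil t|).+1)
      ((t%:E <= v (m%:R - a)%R)%E && (t%:E <= v (m%:R - b)%R)%E)
    <= (t%:E <= v (a - b)%R)%E)%N.
Proof.
move=> t_ge0; have [close_ab|far_ab] := boolP (t%:E <= v (a - b)%R)%E.
  apply: (@leq_trans (\sum_(1 <= m < (p ^ `|Num.ceil t|).+1)
                          (t%:E <= v (m%:R - a)%R)%E)).
    by apply: leq_sum => m _; case: (t%:E <= _)%E; rewrite ?leq_b1.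
  have := @count_le1 _ _ _ (iota_uniq _ _) (close_nat_uniq (a := a) t_ge0).
  by rewrite count_sum_nat.
rewrite big1 // => m _; apply/eqP; rewrite eqb0; apply: contraNN far_ab.
move=> /andP[close_a close_b].
have -> : a - b = (m%:R - b) - (m%:R - a) by ring.
exact: valuationB_ge close_b close_a.
Qed.

Lemma sum_chi_le_sum_pairs (rf rg : seq algC) (t : R) : 0 <= t ->
  (\sum_(1 <= m < (p ^ `|Num.ceil t|).+1) chi v rf t m * chi v rg t m
    <= \sum_(a <- rf) \sum_(b <- rg) (t%:E <= v (a - b)%R)%E)%N.
Proof.
move=> t_ge0; rewrite (eq_bigr (fun m => \sum_(a <- rf) \sum_(b <- rg)
    ((t%:E <= v (m%:R - a)%R)%E && (t%:E <= v (m%:R - b)%R)%E))%N); last first.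
  move=> m _; rewrite /chi !count_sum_nat big_distrl; apply: eq_bigr => a _.
  by rewrite big_distrr; apply: eq_bigr => b _; exact: mulnb.
rewrite (exchange_big_dep xpredT) //=; apply: leq_sum => a _.
rewrite (exchange_big_dep xpredT) //=; apply: leq_sum => b _.
exact: sum_close_pair_le.
Qed.

End PadicValuation.

Theorem mainTheorem12 (R : realType) (p : nat) (v : algC -> \bar R)
  (f g : {poly int}) (rf rg : seq algC) :
  prime p -> padic_valuation p v ->
  f \is monic -> g \is monic ->
  map_poly intr f = \prod_(a <- rf) ('X - a%:P) ->
  map_poly intr g = \prod_(b <- rg) ('X - b%:P) ->
  res_roots rf rg != 0 ->
  (\int[lebesgue_measure]_(t in `[0%R, +oo[%classic) (integrand p v rf rg t)%:E
     <= v (res_roots rf rg))%E.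
Proof.
move=> p_prime vP f_monic g_monic f_roots g_roots _.
set pairs := [seq (a, b) | a <- rf, b <- rg].
have pairs_ge0 ab : ab \in pairs -> (0 <= v (ab.1 - ab.2)%R)%E.
  case/allpairsP => -[a b] [a_rf b_rg ->]; apply: (valuationB_ge vP).
    exact: (roots_monic_valuation_ge0 vP f_monic f_roots).
  exact: (roots_monic_valuation_ge0 vP g_monic g_roots).
rewrite (valuation_res_roots vP) -/pairs.
apply: le_trans (@nonmeasurable_ge0_le_integral _ _ _ lebesgue_measure `[0%R, +oo[%classic _
  (fun t => \sum_(ab <- pairs) (((t%:E <= v (ab.1 - ab.2)%R)%E : nat)%:R : R)%:E) _ _) _.
- by move=> t _; rewrite lee_fin.
- move=> t; rewrite /= in_itv /= andbT => t_ge0.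
  rewrite sumEFin lee_fin /integrand -natr_sum ler_nat big_allpairs.
  exact: sum_chi_le_sum_pairs.
rewrite ge0_integral_sum //; last by move=> ab; exact: measurable_fun_EFin_le.
rewrite big_seq [leRHS]big_seq; apply: lee_sum => ab ab_pairs.
by rewrite integral_EFin_le // pairs_ge0.
Qed.
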